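(* Let $G$ be one of the triangular lattice, the hexagonal lattice, or the kagome lattice, and let $\Omega_G\subset\mathbb{R}^2$ be the orbit of the Grover walk on $G$ (defined in the context). Then \[ \Omega_G \subseteq \{ (x,y)\in \mathbb{R}^2 \;:\; x^2+s(G)\,xy+y^2\leq r(G) \}, \] where $r(G)=1/2$, $1/6$, $1/4$ and $s(G)=-1$, $+1$, $+1$ when $G$ is the triangular, hexagonal, kagome lattice respectively.
   Context: The Grover walk on a graph acts on $\ell^2$ of the symmetric arcs by $(U\psi)(e)=\sum_{f:\,t(f)=o(e)}\big(\tfrac{2}{\deg o(e)}-\delta_{\bar e,f}\big)\psi(f)$. For a crystal lattice (a $\mathbb{Z}^2$-periodic graph with finite quotient graph $G_0$ having vertex set $V_0$), after Fourier transform in the period lattice with wave vector $k=(k_1,k_2)\in[0,2\pi)^2$ (with respect to a chosen basis of the period lattice), the underlying isotropic random walk becomes a twisted random walk $\hat P_k$ on $\ell^2(V_0)$ whose eigenvalues are written $\cos\gamma_j(k)$, $j=1,\dots,|V_0|$, with $\gamma_j(k)=\arccos(\cdot)\in[0,\pi]$. The orbit of the Grover walk is $\Omega_G=\bigcup_{j}\{\nabla\gamma_j(k)=(\partial\gamma_j/\partial k_1,\partial\gamma_j/\partial k_2)\;:\; k\in[0,2\pi)^2,\ \gamma_j \text{ differentiable at } k\}$. Concretely, with the standard choices of period basis used in the paper, the eigenvalues are: (i) triangular lattice ($|V_0|=1$): $\cos\gamma(k)=\tfrac13(\cos k_1+\cos k_2+\cos(k_1+k_2))$; (ii) hexagonal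 lattice ($|V_0|=2$): $\cos\gamma(k)=\pm\tfrac13|1+e^{ik_1}+e^{ik_2}|$; (iii) kagome lattice ($|V_0|=3$): $\cos\gamma(k)\in\{\tfrac14(1\pm|1+e^{ik_1}+e^{ik_2}|)\}\cup\{-\tfrac12\}$. *)

From Stdlib Require Import Reals Lra List.
Open Scope R_scope.

Inductive lattice := Triangular | Hexagonal | Kagome.

(* |1 + e^{i k1} + e^{i k2}| *)
Definition absz (k1 k2 : R) : R :=
  sqrt ((1 + cos k1 + cos k2)^2 + (sin k1 + sin k2)^2).

(* The eigenvalues cos(gamma_j(k)) of the twisted random walk, one function per branch j. *)
Definition cos_eigs (G : lattice) : list (R -> R -> R) :=
  match G with
  | Triangular => (fun k1 k2 => (cos k1 + cos k2 + cos (k1 + k2)) / 3) :: nil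
  | Hexagonal => (fun k1 k2 => absz k1 k2 / 3) :: (fun k1 k2 => - (absz k1 k2 / 3)) :: nil
  | Kagome => (fun k1 k2 => (1 + absz k1 k2) / 4) :: (fun k1 k2 => (1 - absz k1 k2) / 4)
              :: (fun _ _ => - (1/2)) :: nil
  end.

Definition gammas (G : lattice) : list (R -> R -> R) :=
  map (fun c => fun k1 k2 => acos (c k1 k2)) (cos_eigs G).

Definition has_gradient (f : R -> R -> R) (k1 k2 g1 g2 : R) : Prop :=
  forall eps, 0 < eps -> exists delta, 0 < delta /\
    forall h1 h2, sqrt (h1^2 + h2^2) < delta ->
      Rabs (f (k1 + h1) (k2 + h2) - f k1 k2 - (g1 * h1 + g2 * h2))
        <= eps * sqrt (h1^2 + h2^2).

Definition orbit (G : lattice) (x y : R) : Prop :=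
  exists gamma, In gamma (gammas G) /\
    exists k1 k2, 0 <= k1 < 2 * PI /\ 0 <= k2 < 2 * PI /\
      has_gradient gamma k1 k2 x y.

Definition r_of (G : lattice) : R :=
  match G with Triangular => 1/2 | Hexagonal => 1/6 | Kagome => 1/4 end.

Definition s_of (G : lattice) : R :=
  match G with Triangular => -1 | Hexagonal => 1 | Kagome => 1 end.

(* Each branch is gamma = acos c.  Where c leaves (-1, 1), or where c attains a
   global extremum, gamma is extremal too, so a gradient there vanishes.
   Elsewhere grad gamma = - grad c / sqrt (1 - c^2), and it suffices to show
   Q(grad c) <= r (1 - c^2) for the quadratic form Q(x, y) = x^2 + s x y + y^2.
   For F(a, b) = cos a + cos b + cos (a + b) a sum-of-squares certificate gives
   3 Q_{-1}(grad F) <= (3 + 2F)(3 - F); the triangular eigenvalue is F / 3.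
   Since |1 + e^{ia} + e^{ib}|^2 = 3 + 2 F(a, -b), and the reflection b -> -b
   turns Q_{-1} into Q_{+1}, the same bound yields Q_{+1}(grad |z|) <= (9 - |z|^2) / 6,
   which gives the hexagonal and kagome cases (|z| is minimal where it is not
   differentiable). *)

From Stdlib Require Import Reals List.
From Stdlib Require Import Lra.
From Coquelicot Require Import Coquelicot.
Open Scope R_scope.

Definition quad (s x y : R) : R := x ^ 2 + s * x * y + y ^ 2.

Lemma quad_scale s t x y : quad s (t * x) (t * y) = t ^ 2 * quad s x y.
Proof. unfold quad; ring. Qed.

Lemma has_gradient_ext f f' k1 k2 g1 g2 : (forall a b, f a b = f' a b) ->
  has_gradient f k1 k2 g1 g2 -> has_gradient f' k1 k2 g1 g2.
Proof.
  intros E H eps Heps. destruct (H eps Heps) as [d [Hd Hf]].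
  exists d; split; [exact Hd|]. intros h1 h2. rewrite <- !E. apply Hf.
Qed.

Lemma has_gradient_swap f k1 k2 g1 g2 : has_gradient f k1 k2 g1 g2 ->
  has_gradient (fun a b => f b a) k2 k1 g2 g1.
Proof.
  intros H eps Heps. destruct (H eps Heps) as [d [Hd Hf]].
  exists d; split; [exact Hd|]. intros h1 h2.
  rewrite (Rplus_comm (h1 ^ 2)), (Rplus_comm (g2 * h1)). apply Hf.
Qed.

Lemma has_gradient_partial1 f k1 k2 g1 g2 : has_gradient f k1 k2 g1 g2 ->
  derivable_pt_lim (fun t => f t k2) k1 g1.
Proof.
  intros H eps Heps. destruct (H (eps / 2) ltac:(lra)) as [d [Hd Hf]].
  exists (mkposreal d Hd). intros h Hh0 Hhd. simpl in Hhd.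
  assert (Hpos : 0 < Rabs h) by (apply Rabs_pos_lt; exact Hh0).
  specialize (Hf h 0).
  replace (sqrt (h ^ 2 + 0 ^ 2)) with (Rabs h) in Hf
    by (rewrite <- sqrt_Rsqr_abs; f_equal; unfold Rsqr; ring).
  rewrite Rplus_0_r in Hf. specialize (Hf Hhd).
  replace ((f (k1 + h) k2 - f k1 k2) / h - g1)
    with ((f (k1 + h) k2 - f k1 k2 - (g1 * h + g2 * 0)) / h) by (field; exact Hh0).
  unfold Rdiv. rewrite Rabs_mult, Rabs_inv.
  apply Rle_lt_trans with (eps / 2); [|lra].
  apply Rmult_le_reg_r with (Rabs h); [exact Hpos|].
  rewrite Rmult_assoc, Rinv_l by lra. lra.
Qed.

Lemma has_gradient_partial2 f k1 k2 g1 g2 : has_gradient f k1 k2 g1 g2 ->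
  derivable_pt_lim (fun t => f k1 t) k2 g2.
Proof. intros H. exact (has_gradient_partial1 _ _ _ _ _ (has_gradient_swap _ _ _ _ _ H)). Qed.

Definition global_extremum (f : R -> R -> R) (k1 k2 : R) : Prop :=
  (forall a b, f a b <= f k1 k2) \/ (forall a b, f k1 k2 <= f a b).

Lemma derivable_pt_lim_extremum (f : R -> R) x l : derivable_pt_lim f x l ->
  (forall y, f y <= f x) \/ (forall y, f x <= f y) -> l = 0.
Proof.
  intros D Hext. rewrite <- (derive_pt_eq_0 f x l (exist _ l D) D).
  destruct Hext as [M | M].
  - apply (deriv_maximum _ (x - 1) (x + 1)); [lra | lra | intros; apply M].
  - apply (deriv_minimum _ (x - 1) (x + 1)); [lra | lra | intros; apply M].
Qed.

Lemma has_gradient_extremum f k1 k2 g1 g2 : has_gradient f k1 k2 g1 g2 ->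
  global_extremum f k1 k2 -> g1 = 0 /\ g2 = 0.
Proof.
  intros H Hext. split.
  - apply (derivable_pt_lim_extremum _ _ _ (has_gradient_partial1 _ _ _ _ _ H)).
    destruct Hext as [M | M]; [left | right]; intros; apply M.
  - apply (derivable_pt_lim_extremum _ _ _ (has_gradient_partial2 _ _ _ _ _ H)).
    destruct Hext as [M | M]; [left | right]; intros; apply M.
Qed.

Lemma acos_ge_1 x : 1 <= x -> acos x = 0.
Proof. intros Hx. unfold acos. destruct (Rle_dec x (-1)); [lra|]. destruct (Rle_dec 1 x); [reflexivity | lra]. Qed.

Lemma acos_le_m1 x : x <= -1 -> acos x = PI.
Proof. intros Hx. unfold acos. destruct (Rle_dec x (-1)); [reflexivity | lra]. Qed.

Lemma acos_antitone x y : x <= y -> acos y <= acos x.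
Proof.
  intros Hxy.
  destruct (Rle_dec 1 y) as [Hy | Hy]. { rewrite (acos_ge_1 y Hy). apply acos_bound. }
  destruct (Rle_dec x (-1)) as [Hx | Hx]. { rewrite (acos_le_m1 x Hx). apply acos_bound. }
  destruct (Rle_lt_dec (acos y) (acos x)) as [|Hlt]; [assumption|].
  destruct (acos_bound x), (acos_bound y).
  pose proof (cos_decreasing_1 (acos x) (acos y)) as Hcos.
  rewrite !cos_acos in Hcos by lra. lra.
Qed.

Lemma global_extremum_acos_comp c k1 k2 : global_extremum c k1 k2 ->
  global_extremum (fun a b => acos (c a b)) k1 k2.
Proof.
  intros [M | M]; [right | left]; intros a b; apply acos_antitone, M.
Qed.

Lemma global_extremum_acos_out c k1 k2 : ~ (-1 < c k1 k2 < 1) ->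
  global_extremum (fun a b => acos (c a b)) k1 k2.
Proof.
  intros Hout. destruct (Rle_dec 1 (c k1 k2)) as [Hc | Hc].
  - right. intros a b. rewrite (acos_ge_1 _ Hc). apply acos_bound.
  - left. intros a b. rewrite (acos_le_m1 (c k1 k2)) by lra. apply acos_bound.
Qed.

Lemma has_gradient_acos_comp c k1 k2 g1 g2 d1 d2 :
  has_gradient (fun a b => acos (c a b)) k1 k2 g1 g2 -> -1 < c k1 k2 < 1 ->
  derivable_pt_lim (fun t => c t k2) k1 d1 -> derivable_pt_lim (fun t => c k1 t) k2 d2 ->
  g1 = -1 / sqrt (1 - (c k1 k2)²) * d1 /\ g2 = -1 / sqrt (1 - (c k1 k2)²) * d2.
Proof.
  intros H Hc D1 D2.
  assert (Dacos : derivable_pt_lim acos (c k1 k2) (-1 / sqrt (1 - (c k1 k2)²))).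
  { apply (derive_pt_eq_1 _ _ _ (derivable_pt_acos _ Hc)). apply derive_pt_acos. }
  split.
  - apply (uniqueness_limite (fun t => acos (c t k2)) k1).
    + exact (has_gradient_partial1 _ _ _ _ _ H).
    + exact (derivable_pt_lim_comp _ acos _ _ _ D1 Dacos).
  - apply (uniqueness_limite (fun t => acos (c k1 t)) k2).
    + exact (has_gradient_partial2 _ _ _ _ _ H).
    + exact (derivable_pt_lim_comp _ acos _ _ _ D2 Dacos).
Qed.

Lemma acos_gradient_bound c s r k1 k2 g1 g2 d1 d2 : 0 <= r ->
  has_gradient (fun a b => acos (c a b)) k1 k2 g1 g2 ->
  derivable_pt_lim (fun t => c t k2) k1 d1 -> derivable_pt_lim (fun t => c k1 t) k2 d2 ->
  (-1 < c k1 k2 < 1 -> quad s d1 d2 <= r * (1 - c k1 k2 ^ 2)) ->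
  quad s g1 g2 <= r.
Proof.
  intros Hr H D1 D2 Hd.
  destruct (Rlt_dec (-1) (c k1 k2)) as [Hlo|Hlo]; [destruct (Rlt_dec (c k1 k2) 1) as [Hhi|Hhi]|].
  2, 3: destruct (has_gradient_extremum _ _ _ _ _ H) as [-> ->];
    [apply global_extremum_acos_out; lra | unfold quad; lra].
  destruct (has_gradient_acos_comp _ _ _ _ _ _ _ H (conj Hlo Hhi) D1 D2) as [-> ->].
  specialize (Hd (conj Hlo Hhi)).
  assert (Hpos : 0 < 1 - c k1 k2 ^ 2) by nra.
  replace (1 - (c k1 k2)²) with (1 - c k1 k2 ^ 2) by (unfold Rsqr; ring).
  rewrite quad_scale.
  replace ((-1 / sqrt (1 - c k1 k2 ^ 2)) ^ 2) with (/ (1 - c k1 k2 ^ 2)).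
  - apply Rmult_le_reg_l with (1 - c k1 k2 ^ 2); [exact Hpos|].
    rewrite <- Rmult_assoc, Rinv_r by lra. lra.
  - pose proof (sqrt_lt_R0 _ Hpos). rewrite <- (pow2_sqrt (1 - c k1 k2 ^ 2)) at 1 by lra.
    field. lra.
Qed.

Definition cos_sum3 (a b : R) : R := cos a + cos b + cos (a + b).

Lemma cos_sum3_gradient_bound a b :
  3 * quad (-1) (-(sin a + sin (a + b))) (-(sin b + sin (a + b)))
  <= (3 + 2 * cos_sum3 a b) * (3 - cos_sum3 a b).
Proof.
  assert (Hcert : (3 + 2 * cos_sum3 a b) * (3 - cos_sum3 a b)
      - 3 * quad (-1) (-(sin a + sin (a + b))) (-(sin b + sin (a + b)))
    = ((2 * cos (a + b) - cos a - cos b) ^ 2 + 3 * ((1 - cos (a + b)) * (1 - cos (a - b)))) / 4).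
  { unfold quad, cos_sum3. rewrite cos_plus, cos_minus, sin_plus.
    pose proof (sin2_cos2 a) as Ha. pose proof (sin2_cos2 b) as Hb. unfold Rsqr in Ha, Hb.
    set (p := cos a) in *. set (q := cos b) in *. set (u := sin a) in *. set (v := sin b) in *.
    (* The multipliers are the quotients of reducing the difference modulo u^2 = 1 - p^2, v^2 = 1 - q^2. *)
    assert (Hid : forall X Y : R, X - Y
        = - (3 + 3 * q + 3 * q ^ 2 + 9 / 4 * v ^ 2) * (u * u + p * p - 1)
          - (21 / 4 + 3 * p + 3 / 4 * p ^ 2) * (v * v + q * q - 1) -> X = Y).
    { intros X Y HXY. rewrite Ha, Hb in HXY. lra. }
    apply Hid. field. }
  pose proof (pow2_ge_0 (2 * cos (a + b) - cos a - cos b)).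
  pose proof (COS_bound (a + b)). pose proof (COS_bound (a - b)).
  assert (0 <= (1 - cos (a + b)) * (1 - cos (a - b))) by (apply Rmult_le_pos; lra).
  lra.
Qed.

Lemma triangular_bound k1 k2 g1 g2 :
  has_gradient (fun a b => acos (cos_sum3 a b / 3)) k1 k2 g1 g2 -> quad (-1) g1 g2 <= 1 / 2.
Proof.
  intros H.
  apply (acos_gradient_bound (fun a b => cos_sum3 a b / 3) _ _ k1 k2 _ _
           (/ 3 * -(sin k1 + sin (k1 + k2))) (/ 3 * -(sin k2 + sin (k1 + k2)))); [lra | exact H | | |].
  - apply is_derive_Reals. unfold cos_sum3. auto_derive; [exact I | field].
  - apply is_derive_Reals. unfold cos_sum3. auto_derive; [exact I | field].
  - intros _. rewrite quad_scale.
    pose proof (cos_sum3_gradient_bound k1 k2).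
    pose proof (pow2_ge_0 (3 - cos_sum3 k1 k2)).
    set (F := cos_sum3 k1 k2) in *. lra.
Qed.

Lemma absz_sq_eq a b :
  (1 + cos a + cos b) ^ 2 + (sin a + sin b) ^ 2 = 3 + 2 * cos_sum3 a (- b).
Proof.
  unfold cos_sum3. rewrite cos_plus, cos_neg, sin_neg.
  pose proof (sin2_cos2 a) as Ha. pose proof (sin2_cos2 b) as Hb. unfold Rsqr in Ha, Hb.
  nra.
Qed.

Lemma absz_eq a b : absz a b = sqrt (3 + 2 * cos_sum3 a (- b)).
Proof. unfold absz. rewrite absz_sq_eq. reflexivity. Qed.

Lemma absz_sq a b : absz a b ^ 2 = 3 + 2 * cos_sum3 a (- b).
Proof.
  unfold absz. rewrite pow2_sqrt; [apply absz_sq_eq|].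
  pose proof (pow2_ge_0 (1 + cos a + cos b)). pose proof (pow2_ge_0 (sin a + sin b)). lra.
Qed.

Lemma absz_partial1 a b : 0 < absz a b ->
  derivable_pt_lim (fun t => absz t b) a (-(sin a + sin (a - b)) / absz a b).
Proof.
  intros Hpos. assert (HS : 0 < 3 + 2 * cos_sum3 a (- b)) by (rewrite <- absz_sq; apply pow_lt, Hpos).
  apply is_derive_Reals.
  apply (is_derive_ext (fun t => sqrt (3 + 2 * cos_sum3 t (- b)))); [intros; symmetry; apply absz_eq|].
  rewrite absz_eq in *. unfold cos_sum3 in *.
  auto_derive; [exact HS | unfold Rminus; field; lra].
Qed.

Lemma absz_partial2 a b : 0 < absz a b ->
  derivable_pt_lim (fun t => absz a t) b ((sin (a - b) - sin b) / absz a b).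
Proof.
  intros Hpos. assert (HS : 0 < 3 + 2 * cos_sum3 a (- b)) by (rewrite <- absz_sq; apply pow_lt, Hpos).
  apply is_derive_Reals.
  apply (is_derive_ext (fun t => sqrt (3 + 2 * cos_sum3 a (- t)))); [intros; symmetry; apply absz_eq|].
  rewrite absz_eq in *. unfold cos_sum3 in *.
  auto_derive; [exact HS | rewrite sin_neg; unfold Rminus; field; lra].
Qed.

Lemma absz_gradient_bound a b : 0 < absz a b ->
  quad 1 (-(sin a + sin (a - b)) / absz a b) ((sin (a - b) - sin b) / absz a b)
  <= (9 - absz a b ^ 2) / 6.
Proof.
  intros Hpos.
  pose proof (cos_sum3_gradient_bound a (- b)) as Hbound.
  rewrite sin_neg in Hbound. fold (a - b) in Hbound.
  replace (quad 1 _ _) with (quad (-1) (-(sin a + sin (a - b))) (-(- sin b + sin (a - b))) / absz a b ^ 2)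
    by (unfold quad; field; lra).
  pose proof (pow_lt _ 2 Hpos) as Hsq_pos. rewrite absz_sq in *.
  set (F := cos_sum3 a (- b)) in *. set (Q := quad (-1) _ _) in *.
  apply Rmult_le_reg_r with (3 + 2 * F); [exact Hsq_pos|].
  unfold Rdiv. rewrite Rmult_assoc, Rinv_l by lra. nra.
Qed.

Lemma absz_branch_bound al be r k1 k2 g1 g2 : 0 <= r ->
  (forall sg, 0 < sg -> -1 < al + be * sg < 1 ->
     be ^ 2 * (9 - sg ^ 2) <= 6 * r * (1 - (al + be * sg) ^ 2)) ->
  has_gradient (fun a b => acos (al + be * absz a b)) k1 k2 g1 g2 ->
  quad 1 g1 g2 <= r.
Proof.
  intros Hr Hcoef H.
  assert (Habs : forall a b, 0 <= absz a b) by (intros; apply sqrt_pos).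
  destruct (Req_dec (absz k1 k2) 0) as [Hzero | Hnz].
  - assert (Hext : global_extremum (fun a b => al + be * absz a b) k1 k2).
    { unfold global_extremum. rewrite Hzero.
      destruct (Rle_lt_dec 0 be); [right | left]; intros a b; specialize (Habs a b); nra. }
    destruct (has_gradient_extremum _ _ _ _ _ H (global_extremum_acos_comp _ _ _ Hext)) as [-> ->].
    unfold quad; lra.
  - assert (Hpos : 0 < absz k1 k2) by (specialize (Habs k1 k2); lra).
    eapply (acos_gradient_bound _ _ _ _ _ _ _ _ _ Hr H).
    + apply derivable_pt_lim_plus; [apply derivable_pt_lim_const|].
      apply derivable_pt_lim_scal, absz_partial1, Hpos.
    + apply derivable_pt_lim_plus; [apply derivable_pt_lim_const|].
      apply derivable_pt_lim_scal, absz_partial2, Hpos.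
    + intros Hc. rewrite !Rplus_0_l, quad_scale.
      pose proof (absz_gradient_bound _ _ Hpos).
      specialize (Hcoef _ Hpos Hc). nra.
Qed.

Theorem theorem4 : forall (G : lattice) (x y : R),
  orbit G x y -> x^2 + s_of G * x * y + y^2 <= r_of G.
Proof.
  intros G x y [gamma [Hin [k1 [k2 [_ [_ H]]]]]].
  change (quad (s_of G) x y <= r_of G).
  destruct G; simpl in Hin; simpl.
  - destruct Hin as [<- | []]. exact (triangular_bound _ _ _ _ H).
  - destruct Hin as [<- | [<- | []]].
    + apply (absz_branch_bound 0 (1/3) _ k1 k2); [lra | intros; nra |].
      eapply has_gradient_ext; [|exact H]. intros; simpl. f_equal. field.
    + apply (absz_branch_bound 0 (-1/3) _ k1 k2); [lra | intros; nra |].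
      eapply has_gradient_ext; [|exact H]. intros; simpl. f_equal. field.
  - destruct Hin as [<- | [<- | [<- | []]]].
    + apply (absz_branch_bound (1/4) (1/4) _ k1 k2); [lra | intros; nra |].
      eapply has_gradient_ext; [|exact H]. intros; simpl. f_equal. field.
    + apply (absz_branch_bound (1/4) (-1/4) _ k1 k2); [lra | intros; nra |].
      eapply has_gradient_ext; [|exact H]. intros; simpl. f_equal. field.
    + destruct (has_gradient_extremum _ _ _ _ _ H) as [-> ->].
      * left. intros; apply Rle_refl.
      * unfold quad; lra.
Qed.
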